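(* Let $w\in(1,\infty)$ and $\delta\in(0,1)$. Define the CI reporting procedure $\Phi$ by: for input $(S,\mathbf C)$ with $S\subseteq[K]$, $\mathbf C\in\mathrm{ECI}_K$, if $(S,\mathbf C)\in\Sigma(w)$ report $C_i(w\delta|S|/K)$ for $i\in S$, and otherwise report $C_i(\delta|S|/K)$ for $i\in S$. Then for every random selection $\mathcal S$, e-value families $E_1,\dots,E_K$ and true parameter $\boldsymbol\theta$, $$\mathrm{FCR}(\Phi)=\mathbb{E}\left[\frac{\sum_{i\in\mathcal S}\mathbf 1\{\theta_i\notin\Phi(\mathcal S,\mathbf C^{\mathbf E})_i\}}{|\mathcal S|\vee1}\right]\le\delta .$$
   Context: Fix $K$ and parameter spaces $\Theta_1,\dots,\Theta_K$; the probability space carries a random variable that is standard uniform under every parameter. An e-value family for $\Theta_i$ is $(E_i(\theta))_{\theta\in\Theta_i}$ with $E_i(\theta)\ge0$ and $\mathbb{E}[E_i(\theta)]\le1$ whenever $\theta$ is the true value of $\theta_i$; $C^{\mathbf E}_i(\alpha)=\{\theta\in\Theta_i:E_i(\theta)<1/\alpha\}$ ($1/0=\infty$). $\mathrm{ECI}_K$ is the set of tuples $\mathbf C=(C_1,\dots,C_K)$ where each $C_i:[0,1]\to2^{\Theta_i}$ is nonincreasing with $C_i(\alpha)=\bigcup_{\beta>\alpha}C_i(\beta)$ for $\alpha\in[0,1)$ (the possible realizations of such e-CIs). For $\mathbf C\in\mathrm{ECI}_K$ let $t_i(\theta)=\sup\{1/\alpha:\alpha\in[0,1),\theta\notin C_i(\alpha)\}$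 (with $\sup\emptyset=1$). For $S\ne\emptyset,[K]$ let $\gamma(S,\mathbf C)=\sum_{i\in S}\sup_{\theta\in\Theta_i}t_i(\theta)$, $\lambda(S,\mathbf C)=\sum_{i\in[K]\setminus S}\inf_{\theta\in\Theta_i}\big(t_i(\theta)\mathbf 1\{t_i(\theta)>1\}\big)$, and $v(S,\mathbf C)=1+\lambda(S,\mathbf C)/\gamma(S,\mathbf C)$ with $\infty/\infty=0$. $\Sigma(w)=\{(S,\mathbf C): S\ne\emptyset,[K],\ v(S,\mathbf C)\ge w\}$. A random selection $\mathcal S$ is any $2^{[K]}$-valued random variable, and $\Phi$ is applied to $(\mathcal S,\mathbf C^{\mathbf E})$. *)

From HB Require Import structures.
From mathcomp Require Import all_boot all_order all_algebra.
From mathcomp Require Import all_classical all_reals all_analysis.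
From mathcomp Require Import measurable_realfun.
Set Implicit Arguments. Unset Strict Implicit. Unset Printing Implicit Defensive.
Import Order.TTheory GRing.Theory Num.Theory.
Local Open Scope classical_set_scope.
Local Open Scope ring_scope.

Section EFCR.
Variable R : realType.
Variable K : nat.
Variable Theta : 'I_K -> Type.

Definition inv_lev (a : R) : \bar R := if a == 0 then +oo%E else (a^-1)%:E.

Definition CE (E : forall i, Theta i -> \bar R) : forall i, R -> set (Theta i) :=
  fun i a => [set th | (E i th < inv_lev a)%E].

Definition tfun (C : forall i, R -> set (Theta i)) (i : 'I_K) (th : Theta i) : \bar R :=
  let A := [set x : \bar R | exists a : R,
              [/\ 0 <= a, a < 1, ~ C i a th & x = inv_lev a]] in
  if `[< A !=set0 >] then ereal_sup A else 1%E.
Arguments tfun C i th : clear implicits.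

(* extended division with x/+oo = 0 (in particular oo/oo = 0); used only with y > 0 *)
Definition ediv (x y : \bar R) : \bar R :=
  match y with
  | +oo%E => 0%E
  | -oo%E => 0%E
  | r%:E => match x with
            | s%:E => (s / r)%:E
            | +oo%E => +oo%E
            | -oo%E => -oo%E
            end
  end.

Definition gammaS (S : {set 'I_K}) (C : forall i, R -> set (Theta i)) : \bar R :=
  (\sum_(i in S) ereal_sup ((tfun C i) @` setT))%E.

Definition lambdaS (S : {set 'I_K}) (C : forall i, R -> set (Theta i)) : \bar R :=
  (\sum_(i in ~: S) ereal_inf
     ((fun th => if (1 < tfun C i th)%E then tfun C i th else 0%E) @` setT))%E.

Definition vS (S : {set 'I_K}) (C : forall i, R -> set (Theta i)) : \bar R :=
  (1 + ediv (lambdaS S C) (gammaS S C))%E.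

Definition inSigma (w : R) (S : {set 'I_K}) (C : forall i, R -> set (Theta i)) : Prop :=
  [/\ S != finset.set0, S != finset.setT & (w%:E <= vS S C)%E].

Definition Phi (w delta : R) (S : {set 'I_K}) (C : forall i, R -> set (Theta i))
  (i : 'I_K) : set (Theta i) :=
  C i (if `[< inSigma w S C >] then w * delta * #|S|%:R / K%:R
       else delta * #|S|%:R / K%:R).
Arguments Phi w delta S C i : clear implicits.

Definition FCP (w delta : R) (S : {set 'I_K}) (C : forall i, R -> set (Theta i))
  (theta : forall i, Theta i) : R :=
  (\sum_(i in S) (if `[< ~ Phi w delta S C i (theta i) >] then 1 else 0))
    / (maxn #|S| 1)%:R.

End EFCR.

From HB Require Import structures.
From mathcomp Require Import all_boot all_order all_algebra.
From mathcomp Require Import all_classical all_reals all_analysis.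
From mathcomp Require Import measurable_realfun.
From mathcomp Require Import ring.
Import Order.TTheory GRing.Theory Num.Theory.
Local Open Scope classical_set_scope.
Local Open Scope ring_scope.

(* If [i] is miscovered at level [a = c |S| / K], then [E_i(theta_i) >= 1/a],
   so the false coverage proportion is at most [(c/K) sum_(i in S) E_i(theta_i)].
   Outside [Sigma(w)] one takes [c = delta].  On [Sigma(w)], [c = w delta]; since
   [t_i >= E_i] everywhere and [t_i <= E_i] wherever [t_i > 1], [gamma] dominates
   [sum_(i in S) E_i(theta_i)] and [lambda] is dominated by the remaining sum, so
   [v >= w] forces [w sum_(i in S) E_i(theta_i) <= sum_i E_i(theta_i)].  In both
   cases FCP is pointwise at most [delta] times the mean of the [K] e-values,
   whose expectation is at most [delta]. *)

Section ediv.
Local Open Scope ereal_scope.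

Lemma lee_ediv_mul (R : realType) (c : R) (x y : \bar R) :
  (0 < c)%R -> 0 <= y -> c%:E <= ediv x y -> c%:E * y <= x.
Proof.
move=> c0; case: y => [r||] //= r0; last by rewrite lee_fin leNgt c0.
rewrite lee_fin le_eqVlt in r0; case/orP: r0 => [/eqP <-|r0].
  by case: x => [s||] //=; rewrite ?leey // invr0 mulr0 lee_fin leNgt c0.
case: x => [s||] /=; last 2 first.
- by move=> _; exact: leey.
- by rewrite leeNy_eq.
by rewrite !lee_fin ler_pdivlMr.
Qed.

End ediv.

Section evalue_CI.
Local Open Scope ereal_scope.
Context {R : realType} {K : nat} {Theta : 'I_K -> Type}.
Variable Ev : forall i, Theta i -> \bar R.

Lemma notin_CE_le {i : 'I_K} {th : Theta i} {a : R} :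
  (0 < a)%R -> ~ CE Ev a th -> (a^-1)%:E <= Ev i th.
Proof. by move=> a0; rewrite /CE /inv_lev gt_eqF //= => /negP; rewrite -leNgt. Qed.

Lemma le_tfun_CE {i : 'I_K} (th : Theta i) : Ev i th <= tfun (CE Ev) th.
Proof.
rewrite /tfun; set A := [set x | _].
have [Ev_le1|Ev_gt1] := leP (Ev i th) 1.
  case: asboolP => [[x Ax]|_]; last by [].
  apply: le_trans Ev_le1 (le_trans _ (ereal_sup_ubound Ax)).
  have [a [a0 a1 _ ->]] := Ax.
  rewrite /inv_lev; case: eqP => [_|/eqP an0]; first exact: leey.
  by rewrite lee_fin invf_ge1 ?(ltW a1) // lt_neqAle eq_sym an0.
have [a [a0 a1 Ev_inv]] :
    exists a : R, [/\ (0 <= a)%R, (a < 1)%R & inv_lev a = Ev i th].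
  move: Ev_gt1; case: (Ev i th) => [r|_|//]; last by exists 0%R; rewrite /inv_lev eqxx.
  rewrite lte_fin => r_gt1; have r0 : (0 < r)%R by apply: lt_trans r_gt1.
  exists r^-1%R; split; first by rewrite invr_ge0 ltW.
    by rewrite invf_lt1.
  by rewrite /inv_lev gt_eqF ?invr_gt0 ?invrK.
have AEv : A (Ev i th) by exists a; split => //; rewrite /CE /= Ev_inv ltxx.
by case: asboolP => [_|[]]; [exact: ereal_sup_ubound|exists (Ev i th)].
Qed.

Lemma tfun_CE_le {i : 'I_K} (th : Theta i) :
  1 < tfun (CE Ev) th -> tfun (CE Ev) th <= Ev i th.
Proof.
rewrite /tfun; case: asboolP => [_ _|_]; last by rewrite ltxx.
apply: ge_ereal_sup => _ [a [_ _ notCa ->]].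
by move: notCa; rewrite /CE => /negP; rewrite -leNgt.
Qed.

Variable theta : forall i, Theta i.
Hypothesis Ev_ge0 : forall i th, 0 <= Ev i th.

Lemma sum_le_gammaS (S : {set 'I_K}) :
  \sum_(i in S) Ev i (theta i) <= gammaS S (CE Ev).
Proof.
apply: lee_sum => i _; apply: (le_trans (le_tfun_CE (theta i))).
by apply: ereal_sup_ubound; exists (theta i).
Qed.

Lemma lambdaS_le_sum (S : {set 'I_K}) :
  lambdaS S (CE Ev) <= \sum_(i in ~: S) Ev i (theta i).
Proof.
apply: lee_sum => i _; set t := tfun (CE Ev) (theta i).
apply: (@le_trans _ _ (if 1 < t then t else 0)).
  by apply: ereal_inf_lbound; exists (theta i).
by case: ifP => [/tfun_CE_le|_].
Qed.

Lemma inSigma_sum_le (w : R) (S : {set 'I_K}) : (1 < w)%R ->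
  inSigma w S (CE Ev) ->
  w%:E * (\sum_(i in S) Ev i (theta i)) <=
    (\sum_(i in S) Ev i (theta i)) + (\sum_(i in ~: S) Ev i (theta i)).
Proof.
move=> w1 [_ _]; rewrite /vS -leeBlDl // -EFinB => /lee_ediv_mul ge_gamma.
have X0 : 0 <= \sum_(i in S) Ev i (theta i) by exact: sume_ge0.
have w1_0 : (0 < w - 1)%R by rewrite subr_gt0.
have : (w - 1)%:E * (\sum_(i in S) Ev i (theta i)) <= \sum_(i in ~: S) Ev i (theta i).
  apply: le_trans (lee_wpmul2l _ (sum_le_gammaS S)) _; first by rewrite lee_fin ltW.
  apply: le_trans (lambdaS_le_sum S).
  exact/ge_gamma/(le_trans X0 (sum_le_gammaS S)).
set X := \sum_(i in S) _ => rest_le.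
have -> : w%:E * X = X + (w - 1)%:E * X.
  by rewrite -{1}[w](subrK 1%R) EFinD ge0_muleDl ?lee_fin ?(ltW w1_0) // mul1e addeC.
by rewrite leeD2l.
Qed.

Lemma miscoverage_le (c : R) (S : {set 'I_K}) : (0 < c)%R -> S != finset.set0 ->
  ((\sum_(i in S) (if `[< ~ CE Ev (c * #|S|%:R / K%:R) (theta i) >] then 1 else 0))
     / (maxn #|S| 1)%:R)%:E <= (c / K%:R)%:E * (\sum_(i in S) Ev i (theta i)).
Proof.
move=> c0 S0; rewrite -card_gt0 in S0.
have K0 : (0 < K)%N by rewrite (leq_trans S0) // -[X in (_ <= X)%N]card_ord max_card.
have cK0 : 0 <= (c / K%:R)%:E by rewrite lee_fin divr_ge0 ?(ltW c0).
rewrite (maxn_idPl S0) mulr_suml -sumEFin ge0_sume_distrr => [|i _]; last exact: Ev_ge0.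
apply: lee_sum => i _; case: asboolP => [notC|_]; last first.
  by rewrite mul0r mule_ge0.
have a0 : (0 < c * #|S|%:R / K%:R)%R by rewrite !mulr_gt0 ?invr_gt0 ?ltr0n.
apply: le_trans (lee_wpmul2l cK0 (notin_CE_le a0 notC)); rewrite -EFinM lee_fin.
suff -> : (c / K%:R / (c * #|S|%:R / K%:R) = 1 / #|S|%:R)%R by [].
by field; rewrite !pnatr_eq0 -!lt0n S0 K0 gt_eqF.
Qed.

Lemma FCP_le_mean (w delta : R) (S : {set 'I_K}) : (1 < w)%R -> (0 < delta)%R ->
  (FCP w delta S (CE Ev) theta)%:E <=
    (delta / K%:R)%:E * (\sum_(i < K) Ev i (theta i)).
Proof.
move=> w1 delta0.
have dK0 : 0 <= (delta / K%:R)%:E by rewrite lee_fin divr_ge0 ?(ltW delta0).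
have [->|S0] := eqVneq S finset.set0.
  by rewrite /FCP big_set0 mul0r mule_ge0 ?sume_ge0.
have sum_split : \sum_(i < K) Ev i (theta i) =
    \sum_(i in S) Ev i (theta i) + \sum_(i in ~: S) Ev i (theta i).
  by rewrite (bigID (mem S)) /=; congr (_ + _); apply: eq_bigl => i; rewrite finset.in_setC.
rewrite /FCP /Phi sum_split; case: asboolP => [inS|_].
  have wdelta0 : (0 < w * delta)%R by rewrite mulr_gt0 // (lt_trans ltr01 w1).
  apply: le_trans (miscoverage_le (w * delta) S wdelta0 S0) _.
  rewrite (_ : w * delta / K%:R = delta / K%:R * w)%R; last by ring.
  by rewrite EFinM -muleA lee_wpmul2l // inSigma_sum_le.
apply: le_trans (miscoverage_le delta S delta0 S0) _.
by rewrite lee_wpmul2l // leeDl ?sume_ge0.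
Qed.

End evalue_CI.

Lemma FCP_ge0 (R : realType) (K : nat) (Theta : 'I_K -> Type) (w delta : R)
    (S : {set 'I_K}) (C : forall i, R -> set (Theta i)) (theta : forall i, Theta i) :
  (0 <= FCP w delta S C theta)%R.
Proof. by rewrite /FCP divr_ge0 // sumr_ge0 // => i _; case: ifP. Qed.

Section integral_bounds.
Local Open Scope ereal_scope.
Context {d : measure_display} {T : measurableType d} {R : realType}.
Variable mu : {measure set T -> \bar R}.

(* Unlike [ge0_le_integral], this needs no measurability (the integrand of the
   theorem need not be measurable): the integral of a nonnegative function is
   the supremum of the integrals of the simple functions below it. *)
Lemma ge0_le_integralT (f g : T -> \bar R) :
  (forall x, 0 <= f x) -> (forall x, f x <= g x) ->
  \int[mu]_x f x <= \int[mu]_x g x.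
Proof.
move=> f0 fg; have g0 x : 0 <= g x by exact: le_trans (f0 x) (fg x).
rewrite !ge0_integralTE //; apply: ereal_sup_le => _ [h hf <-].
by exists h => // x; exact: le_trans (hf x) (fg x).
Qed.

Lemma integral_scaled_mean_le (n : nat) (X : 'I_n -> T -> \bar R) (c : R) :
  (0 <= c)%R -> (forall i x, 0 <= X i x) -> (forall i, measurable_fun setT (X i)) ->
  (forall i, \int[mu]_x X i x <= 1) ->
  \int[mu]_x ((c / n%:R)%:E * (\sum_(i < n) X i x)) <= c%:E.
Proof.
move=> c0 X0 mX intX.
have cn0 : (0 <= c / n%:R)%R by rewrite divr_ge0.
rewrite ge0_integralZl_EFin //; last 2 first.
- by move=> x _; rewrite sume_ge0.
- exact: emeasurable_sum.
rewrite ge0_integral_sum //.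
have sum_le : \sum_(i < n) \int[mu]_x X i x <= n%:R%:E.
  apply: le_trans (lee_sum _ (fun i _ => intX i)) _.
  by rewrite sumEFin sumr_const card_ord.
apply: le_trans (lee_wpmul2l _ sum_le) _; first by rewrite lee_fin.
rewrite -EFinM lee_fin; have [->|n0] := eqVneq n 0%N; first by rewrite mulr0.
by rewrite divfK // pnatr_eq0.
Qed.

End integral_bounds.

Theorem proposition5 (R : realType) (d : measure_display) (Omega : measurableType d)
  (P : probability Omega R) (K : nat) (Theta : 'I_K -> Type)
  (w delta : R) (hw : 1 < w) (hdelta0 : 0 < delta) (hdelta1 : delta < 1)
  (* the probability space carries a standard uniform random variable *)
  (hU : exists U : Omega -> R, measurable_fun setT U /\
          forall x : R, 0 <= x <= 1 -> P [set om | U om <= x] = x%:E)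
  (* random selection *)
  (Sel : Omega -> {set 'I_K})
  (hSel : forall A : {set 'I_K}, measurable (Sel @^-1` [set A]))
  (* e-value families and the true parameter *)
  (E : forall i : 'I_K, Theta i -> Omega -> \bar R)
  (theta : forall i : 'I_K, Theta i)
  (hEnn : forall i (th : Theta i) om, (0 <= E i th om)%E)
  (hEmeas : forall i, measurable_fun [set: Omega] (E i (theta i) : Omega -> \bar R))
  (hEexp : forall i, (\int[P]_om E i (theta i) om <= 1)%E) :
  (\int[P]_om (FCP w delta (Sel om) (CE (fun i th => E i th om)) theta)%:E
     <= delta%:E)%E.
Proof.
(* The bound holds pointwise in [om]. *)
apply: le_trans (ge0_le_integralT P _ _ _ (fun om => FCP_le_mean _ theta
  (fun i th => hEnn i th om) w delta (Sel om) hw hdelta0)) _.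
  by move=> om; rewrite lee_fin FCP_ge0.
exact: integral_scaled_mean_le (ltW hdelta0) (fun i => hEnn i (theta i)) hEmeas hEexp.
Qed.
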